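(* Let $p>2$ be an integer and $\theta\in(0,1)$. For $\bm q\in\mathbb S^{n-1}$ let $\rho=\tfrac12\min_{1\le i\le n}\min\{\|\bm q-\bm e_i\|_2^2,\|\bm q+\bm e_i\|_2^2\}$. Then $$\rho\le\frac{C_p}{\theta(1-\theta)}\Big(\theta-\mathbb E_\Omega\|\bm q_\Omega\|_2^p\Big),\qquad C_p=\big(1-2(0.5)^{p/2}\big)^{-1}.$$
   Context: $\bm e_i$ are the standard basis vectors of $\mathbb R^n$. $\Omega$ denotes a random subset of $\{1,\dots,n\}$ in which each index is included independently with probability $\theta$ (the support of a vector with i.i.d. $\mathrm{Ber}(\theta)$ entries), and $\bm q_\Omega$ is the subvector of $\bm q$ with entries indexed by $\Omega$ (so $\|\bm q_\emptyset\|_2=0$). *)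

From HB Require Import structures.
From mathcomp Require Import all_boot all_order all_algebra.
Set Implicit Arguments. Unset Strict Implicit. Unset Printing Implicit Defensive.
Import Order.TTheory GRing.Theory Num.Theory.
Local Open Scope ring_scope.

Definition sqnorm (R : rcfType) (n : nat) (v : 'rV[R]_n) : R :=
  \sum_(j < n) v 0 j ^+ 2.

Definition ebasis (R : rcfType) (n : nat) (i : 'I_n) : 'rV[R]_n :=
  \row_(j < n) (i == j)%:R.

Definition dist_i (R : rcfType) (n : nat) (q : 'rV[R]_n) (i : 'I_n) : R :=
  Num.min (sqnorm (q - ebasis R i)) (sqnorm (q + ebasis R i)).

(* rho = 1/2 min_i d_i(q), dimension n.+1 >= 1 (the sphere S^{n} is nonempty) *)
Definition rho (R : rcfType) (n : nat) (q : 'rV[R]_n.+1) : R :=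
  2^-1 * \big[Num.min/dist_i q ord0]_(i < n.+1) dist_i q i.

Definition subnorm (R : rcfType) (n : nat) (q : 'rV[R]_n) (S : {set 'I_n}) : R :=
  Num.sqrt (\sum_(i in S) q 0 i ^+ 2).

(* E_Omega ||q_Omega||_2^p, Omega ~ i.i.d. Bernoulli(theta) support *)
Definition expect_pow (R : rcfType) (n : nat) (theta : R) (p : nat)
    (q : 'rV[R]_n) : R :=
  \sum_(S : {set 'I_n})
     theta ^+ #|S| * (1 - theta) ^+ (n - #|S|) * subnorm q S ^+ p.

(* C_p = (1 - 2 (0.5)^{p/2})^{-1}, with (0.5)^{p/2} = (sqrt(1/2))^p *)
Definition Cp (R : rcfType) (p : nat) : R :=
  (1 - 2 * (Num.sqrt (2^-1 : R)) ^+ p)^-1.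

(** Write [x_k = q_k^2] and [s(S) = sum_(k in S) x_k = ||q_S||^2], so that
    [s(Omega)] has mean [theta] and [E s(Omega) (1 - s(Omega)) =
    theta (1 - theta) (1 - sum_k x_k^2)].  The scalar inequality
    [C_p^-1 t^2 (1 - t^2) <= t^2 - t^p] on [[0, 1]], applied to
    [t = ||q_Omega||] and averaged, gives
    [C_p^-1 theta (1 - theta) (1 - sum_k x_k^2) <= theta - E ||q_Omega||^p].
    Finally [rho = 1 - max_i |q_i|] on the sphere, and
    [sum_k x_k^2 <= max_i x_i <= max_i |q_i|]. *)

From HB Require Import structures.
From mathcomp Require Import all_boot all_order all_algebra.
From mathcomp Require Import ring lra.

Set Implicit Arguments.
Unset Strict Implicit.
Unset Printing Implicit Defensive.
Import Order.TTheory GRing.Theory Num.Theory.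
Local Open Scope ring_scope.

Section SqrtHalf.
Variable R : rcfType.
Local Notation a := (Num.sqrt (2^-1 : R)).

Lemma sqrt_half_sqr : a ^+ 2 = 2^-1.
Proof. by rewrite sqr_sqrtr // invr_ge0 ler0n. Qed.

Lemma sqrt_half_bounds : 2^-1 <= a < 1.
Proof.
have a0 : 0 <= a := sqrtr_ge0 _.
have a2 := sqrt_half_sqr.
have h2 : (2^-1 : R) * 2 = 1 by rewrite mulVf // pnatr_eq0.
by apply/andP; split; nra.
Qed.

Lemma mul2_sqrt_half_exprSS m : 2 * a ^+ m.+2 = a ^+ m.
Proof.
by rewrite exprSr exprSr -mulrA -expr2 sqrt_half_sqr mulrCA mulfV ?mulr1 // pnatr_eq0.
Qed.

Lemma Cp_denom_gt0 p : (2 < p)%N -> 0 < 1 - 2 * a ^+ p.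
Proof.
case: p => [|[|[|m]]] // _; rewrite mul2_sqrt_half_exprSS.
have /andP[_ a1] := sqrt_half_bounds.
by rewrite subr_gt0 exprn_ilt1 ?sqrtr_ge0.
Qed.

Lemma pow_gap_ge p t : (2 < p)%N -> 0 <= t <= 1 ->
  (1 - 2 * a ^+ p) * (t ^+ 2 * (1 - t ^+ 2)) <= t ^+ 2 - t ^+ p.
Proof.
case: p => [|[|[|m]]] // _ /andP[t0 t1].
have /andP[ah a1] := sqrt_half_bounds.
have t20 : 0 <= t ^+ 2 := exprn_ge0 2 t0.
have t21 : t ^+ 2 <= 1 by rewrite exprn_ile1.
have -> : t ^+ m.+3 = t ^+ 2 * t ^+ m.+1 by rewrite -exprD.
rewrite mul2_sqrt_half_exprSS.
suff key : (1 - a ^+ m.+1) * (1 - t ^+ 2) <= 1 - t ^+ m.+1.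
  rewrite -subr_ge0 (_ : _ - _ = t ^+ 2 * (1 - t ^+ m.+1 - (1 - a ^+ m.+1) * (1 - t ^+ 2))).
    by rewrite mulr_ge0 // subr_ge0.
  ring.
(* For p = 3 this needs [a >= 1/2]; for p >= 4, [t^(p-2) <= t^2] suffices. *)
case: m => [|m].
  rewrite !expr1; have : 0 <= (1 - t) * (1 - (1 - a) * (1 + t)) by apply: mulr_ge0; nra.
  nra.
have htm : t ^+ m.+2 <= t ^+ 2 by rewrite ler_wiXn2l.
have am : 0 <= a ^+ m.+2 by rewrite exprn_ge0 ?sqrtr_ge0.
nra.
Qed.

End SqrtHalf.

Lemma prodr_nat_forall (R : comPzSemiRingType) (I : finType) (b : I -> bool) :
  \prod_i (b i)%:R = [forall i, b i]%:R :> R.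
Proof.
have [/forallP bT | /forallPn[i /negbTE bi]] := boolP [forall i, b i].
  by rewrite big1 // => i _; rewrite bT.
by rewrite (bigD1 i) //= bi mul0r.
Qed.

Lemma sumr_in_natr (R : pzSemiRingType) (I : finType) (A : {pred I}) (F : I -> R) :
  \sum_(i in A) F i = \sum_i F i * (i \in A)%:R.
Proof. by rewrite big_mkcond; apply: eq_bigr => i _; rewrite mulr_natr mulrb. Qed.

Lemma sum_sqr_offdiag (R : comPzRingType) (I : finType) (x : I -> R) :
  \sum_i \sum_j x i * x j * (i != j)%:R = (\sum_i x i) ^+ 2 - \sum_i x i ^+ 2.
Proof.
rewrite expr2 big_distrlr -sumrB; apply: eq_bigr => i _.
rewrite (bigD1 i) //= [in RHS](bigD1 i) //= eqxx mulr0 add0r expr2 addrAC subrr add0r.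
by apply: eq_bigr => j ji; rewrite eq_sym ji mulr1.
Qed.

Section BernoulliSubsets.
Variables (R : comNzRingType) (n : nat) (theta : R).

Definition bernw (S : {set 'I_n}) : R := theta ^+ #|S| * (1 - theta) ^+ (n - #|S|).

Lemma bernw_prod S : bernw S = \prod_k (if k \in S then theta else 1 - theta).
Proof.
rewrite (bigID (mem S)) /= (eq_bigr (fun=> theta)); last by move=> k ->.
rewrite [X in _ * X](eq_bigr (fun=> 1 - theta)); last by move=> k /negbTE ->.
rewrite !prodr_const /bernw; congr (_ * _ ^+ _).
have := cardsC S; rewrite card_ord => {1}<-; rewrite addKn.
by apply: eq_card => k; rewrite inE.
Qed.

Lemma bern_sum_forall (u v : 'I_n -> bool) :
  \sum_S bernw S * [forall k, if k \in S then u k else v k]%:R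
  = \prod_k ((u k)%:R * theta + (v k)%:R * (1 - theta)).
Proof.
rewrite bigA_distr; apply: eq_bigr => S _.
rewrite bernw_prod mulrC -prodr_nat_forall -big_split /=.
by apply: eq_bigr => k _; case: (k \in S).
Qed.

Lemma bern_sum_mem i : \sum_S bernw S * (i \in S)%:R = theta.
Proof.
transitivity (\sum_S bernw S * [forall k, if k \in S then true else k != i]%:R).
  apply: eq_bigr => S _; congr (_ * (nat_of_bool _)%:R).
  apply/idP/forallP => [iS k | /(_ i)]; last by case: ifP; rewrite ?eqxx.
  by case: ifPn => // kS; apply: contraNneq kS => ->.
rewrite bern_sum_forall (bigD1 i) //= eqxx mul0r addr0 mul1r big1 ?mulr1 // => k ki.
by rewrite ki mul1r addrC subrK.
Qed.

Lemma bern_sum_mem_notin i j :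
  \sum_S bernw S * ((i \in S) && (j \notin S))%:R = (i != j)%:R * (theta * (1 - theta)).
Proof.
transitivity (\sum_S bernw S * [forall k, if k \in S then k != j else k != i]%:R).
  apply: eq_bigr => S _; congr (_ * (nat_of_bool _)%:R).
  apply/andP/forallP => [[iS jS] k | ijS].
    by case: ifPn => [kS | kS]; [apply: contraTneq kS => -> | apply: contraNneq kS => ->].
  split; first by have := ijS i; case: ifP; rewrite ?eqxx.
  by apply/negP => jS; have := ijS j; rewrite jS eqxx.
rewrite bern_sum_forall; have [<- | ij] := eqVneq i j.
  by rewrite (bigD1 i) //= eqxx !mul0r addr0 mul0r.
rewrite (bigD1 i) //= (bigD1 j) 1?eq_sym //= eq_sym ij !eqxx /= big1 ?mulr1.
  by rewrite !mul1r !mul0r add0r addr0.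
by move=> k /andP[-> ->]; rewrite !mul1r addrC subrK.
Qed.

Lemma bern_mean_subsum (x : 'I_n -> R) :
  \sum_S bernw S * \sum_(k in S) x k = theta * \sum_k x k.
Proof.
under eq_bigr do rewrite sumr_in_natr mulr_sumr.
rewrite exchange_big mulr_sumr; apply: eq_bigr => k _.
under eq_bigr do rewrite mulrCA.
by rewrite -mulr_sumr bern_sum_mem mulrC.
Qed.

Lemma bern_mean_subsum_mul_compl (x : 'I_n -> R) :
  \sum_S bernw S * ((\sum_(k in S) x k) * \sum_(k in ~: S) x k)
  = theta * (1 - theta) * ((\sum_k x k) ^+ 2 - \sum_k x k ^+ 2).
Proof.
transitivity (\sum_S \sum_i \sum_j
    x i * x j * (bernw S * ((i \in S) && (j \notin S))%:R)).
  apply: eq_bigr => S _; rewrite big_distrlr mulr_sumr big_mkcond /=.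
  apply: eq_bigr => i _; case: (i \in S) => /=; last by rewrite big1 // => j _; rewrite !mulr0.
  rewrite mulr_sumr big_mkcond /=; apply: eq_bigr => j _.
  by rewrite in_setC; case: (j \in S); rewrite /= ?mulr0 ?mulr1 // mulrC.
rewrite exchange_big -sum_sqr_offdiag mulr_sumr; apply: eq_bigr => i _.
rewrite exchange_big mulr_sumr; apply: eq_bigr => j _.
by rewrite -mulr_sumr bern_sum_mem_notin mulrA mulrC.
Qed.

End BernoulliSubsets.

Lemma bernw_ge0 (R : numDomainType) n (theta : R) (S : {set 'I_n}) :
  0 <= theta <= 1 -> 0 <= bernw theta S.
Proof. by case/andP=> t0 t1; rewrite mulr_ge0 ?exprn_ge0 ?subr_ge0. Qed.

Section UnitVector.
Variables (R : rcfType) (n : nat) (q : 'rV[R]_n).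
Hypothesis q_unit : sqnorm q = 1.

Lemma sum_compl_sqr (S : {set 'I_n}) :
  \sum_(k in ~: S) q 0 k ^+ 2 = 1 - \sum_(k in S) q 0 k ^+ 2.
Proof.
rewrite -q_unit /sqnorm [X in _ = X - _](bigID (mem S)) /= addrC addrK.
by apply: eq_bigl => k; rewrite inE.
Qed.

Lemma expect_pow_gap p theta : (2 < p)%N -> 0 <= theta <= 1 ->
  (1 - 2 * Num.sqrt (2^-1 : R) ^+ p) *
    (theta * (1 - theta) * (1 - \sum_k (q 0 k ^+ 2) ^+ 2))
  <= theta - expect_pow theta p q.
Proof.
move=> p_gt2 theta01; pose s (S : {set 'I_n}) := \sum_(k in S) q 0 k ^+ 2.
have sum1 : \sum_k q 0 k ^+ 2 = 1 := q_unit.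
have mean : theta = \sum_S bernw theta S * s S.
  by rewrite bern_mean_subsum sum1 mulr1.
have cross : theta * (1 - theta) * (1 - \sum_k (q 0 k ^+ 2) ^+ 2)
           = \sum_S bernw theta S * (s S * (1 - s S)).
  rewrite -{2}(expr1n R 2) -[X in X ^+ 2 - _]sum1 -bern_mean_subsum_mul_compl.
  by apply: eq_bigr => S _; rewrite sum_compl_sqr.
rewrite cross [X in _ <= X - _]mean /expect_pow mulr_sumr -sumrB; apply: ler_sum => S _.
rewrite -/(bernw theta S) -mulrBr mulrCA ler_wpM2l ?bernw_ge0 //.
have s0 : 0 <= s S by apply: sumr_ge0 => k _; apply: sqr_ge0.
have s1 : s S <= 1.
  by rewrite -subr_ge0 -sum_compl_sqr; apply: sumr_ge0 => k _; apply: sqr_ge0.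
have t01 : 0 <= subnorm q S <= 1 by rewrite sqrtr_ge0 -sqrtr1 ler_sqrt.
by have := pow_gap_ge p_gt2 t01; rewrite sqr_sqrtr.
Qed.

End UnitVector.

Lemma sqnorm_add_scale_ebasis (R : rcfType) n (q : 'rV[R]_n) (e : R) j :
  sqnorm (q + e *: ebasis R j) = sqnorm q + 2 * e * q 0 j + e ^+ 2.
Proof.
rewrite /sqnorm (bigD1 j) //= [in RHS](bigD1 j) //= !mxE eqxx mulr1.
rewrite (eq_bigr (fun i => q 0 i ^+ 2)); first ring.
by move=> i ij; rewrite !mxE eq_sym (negbTE ij) mulr0 addr0.
Qed.

Lemma rho_le_1_sub_abs (R : rcfType) n (q : 'rV[R]_n.+1) j :
  sqnorm q = 1 -> rho q <= 1 - `|q 0 j|.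
Proof.
move=> q_unit.
have dist_le : dist_i q j <= 2 - 2 * `|q 0 j|.
  rewrite /dist_i ge_min.
  have := sqnorm_add_scale_ebasis q (-1) j; rewrite scaleN1r => ->.
  have := sqnorm_add_scale_ebasis q 1 j; rewrite scale1r => ->.
  rewrite q_unit sqrrN expr1n.
  by case: (ger0P (q 0 j)) => hy; apply/orP; [left | right]; lra.
have rho_le : rho q <= 2^-1 * dist_i q j.
  by rewrite /rho ler_wpM2l ?invr_ge0 ?ler0n // bigmin_le.
have h2 : (2^-1 : R) * 2 = 1 by rewrite mulVf // pnatr_eq0.
apply: (le_trans rho_le); nra.
Qed.

Lemma rho_le_1_sub_sum_sqr (R : rcfType) n (q : 'rV[R]_n.+1) :
  sqnorm q = 1 -> rho q <= 1 - \sum_k (q 0 k ^+ 2) ^+ 2.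
Proof.
move=> q_unit; have sum1 : \sum_k q 0 k ^+ 2 = 1 := q_unit.
have [j _ jmax] := arg_maxP (fun k => q 0 k ^+ 2) (isT : predT ord0).
have sum_le : \sum_k (q 0 k ^+ 2) ^+ 2 <= q 0 j ^+ 2.
  rewrite -[leRHS]mul1r -sum1 mulr_suml; apply: ler_sum => k _.
  by rewrite expr2 ler_wpM2l ?sqr_ge0 //; apply: jmax.
have sqr_le1 : `|q 0 j| ^+ 2 <= 1.
  rewrite (real_normK (num_real _)) -sum1 (bigD1 j) //= lerDl.
  by apply: sumr_ge0 => k _; apply: sqr_ge0.
have := rho_le_1_sub_abs j q_unit; rewrite -(real_normK (num_real _)) in sum_le.
have := normr_ge0 (q 0 j); nra.
Qed.

Theorem mainTheorem7 (R : rcfType) (p : nat) (theta : R) (n : nat)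
    (q : 'rV[R]_n.+1) :
  (2 < p)%N -> 0 < theta -> theta < 1 -> sqnorm q = 1 ->
  rho q <= Cp R p / (theta * (1 - theta)) * (theta - expect_pow theta p q).
Proof.
move=> p_gt2 theta_gt0 theta_lt1 q_unit.
have c_gt0 := Cp_denom_gt0 R p_gt2.
have v_gt0 : 0 < theta * (1 - theta) by rewrite mulr_gt0 ?subr_gt0.
have theta01 : 0 <= theta <= 1 by rewrite !ltW.
apply: (le_trans (rho_le_1_sub_sum_sqr q_unit)).
rewrite /Cp -invfM mulrC ler_pdivlMr; last exact: mulr_gt0.
by rewrite mulrC -mulrA; apply: expect_pow_gap.
Qed.
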